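(* Assume $\mathcal A$ is closed and star shaped, $\mathcal P$ is closed and star shaped, and $V_0$ is lower semicontinuous and star shaped. Then for every scalable acceptable deal $x\in\mathbb R^N$ and every $\lambda>0$ we have $\lambda x\in\mathcal P$, $V_0(\lambda x)\le0$ and $\lambda V_1(x)\in\mathcal A$. In particular, every scalable acceptable deal is an acceptable deal.
   Context: Standing setup: Let $\mathcal{X}$ be a real topological vector space partially ordered by a convex cone $\mathcal{X}_+\subset\mathcal X$; write $X\ge Y$ iff $X-Y\in\mathcal X_+$. Fix $N\in\mathbb N$ and: a set $\mathcal P\subset\mathbb R^N$ with $0\in\mathcal P$; a function $V_0:\mathbb R^N\to\mathbb R$ with $V_0(0)=0$ and $V_0(x)\ge -V_0(-x)$ for all $x\in\mathbb R^N$; a map $V_1:\mathbb R^N\to\mathcal X$ with $V_1(0)=0$ and $V_1(x)\le -V_1(-x)$ for all $x\in\mathbb R^N$; a set $\mathcal A\subset\mathcal X$ with $0\in\mathcal A$ and $\mathcal A+\mathcal X_+\subset\mathcal A$. A set $C$ is star shaped if $\lambda C\subset C$ for all $\lambda\in[0,1]$; a function $f$ is star shaped if $f(\lambda x)\le\lambda f(x)$ for all $\lambda\in[0,1]$. Asymptotic notions: for a nonempty set $C$ in a topological vector space, $C^\infty=\{X:\exists\text{ nets }(X_\alpha)\subset C,\ (\lambda_\alpha)\subset[0,\infty),\ \lambda_\alpha\to0,\ \lambda_\alpha X_\alpha\to X\}$. For $f:\mathbb R^N\to\mathbb R$, its asymptotic function $f^\infty:\mathbb R^N\to[-\infty,\infty]$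 is the function whose epigraph $\{(x,m)\in\mathbb R^N\times\mathbb R: f^\infty(x)\le m\}$ equals $(\operatorname{epi}f)^\infty$, where $\operatorname{epi}f=\{(x,m)\in\mathbb R^N\times\mathbb R: f(x)\le m\}$. A portfolio $x\in\mathbb R^N$ is an acceptable deal if $x\in\mathcal P$, $V_0(x)\le0$ and $V_1(x)\in\mathcal A\setminus\{0\}$; it is a scalable acceptable deal if $x\in\mathcal P^\infty$, $V_0^\infty(x)\le0$ and $V_1(x)\in\mathcal A^\infty\setminus\{0\}$. *)

From mathcomp Require Import all_boot all_algebra.
From mathcomp Require Import all_classical all_reals all_analysis.

Set Implicit Arguments.
Unset Strict Implicit.
Unset Printing Implicit Defensive.

Import GRing.Theory Num.Theory.
Local Open Scope classical_set_scope.
Local Open Scope ring_scope.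

Definition directed_set (I : Type) (le : I -> I -> Prop) : Prop :=
  [/\ inhabited I,
      (forall i, le i i),
      (forall i j k, le i j -> le j k -> le i k) &
      (forall i j, exists k, le i k /\ le j k)].

Definition net_cvg (T : topologicalType) (I : Type) (le : I -> I -> Prop)
  (f : I -> T) (x : T) : Prop :=
  forall U : set T, nbhs x U -> exists i0, forall i, le i0 i -> U (f i).

Definition asym_cone (R : realType) (T : topologicalLmodType R) (C : set T)
  : set T :=
  [set X | exists (I : Type) (le : I -> I -> Prop),
     directed_set le /\
     exists (Xa : I -> T) (la : I -> R),
       [/\ (forall i, C (Xa i)),
           (forall i, 0 <= la i),
           net_cvg le (la : I -> R^o) 0 &
           net_cvg le (fun i => la i *: Xa i) X]].

Definition epi (R : realType) (N : nat) (f : 'rV[R]_N -> R)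
  : set ('rV[R]_N * R^o) :=
  [set p | f p.1 <= p.2].

(* The asymptotic function f^oo is the (extended-real valued) function whose
   epigraph is (epi f)^oo; hence  f^oo(x) <= m  means  (x, m) \in (epi f)^oo. *)
Definition asym_fun_le (R : realType) (N : nat) (f : 'rV[R]_N -> R)
  (x : 'rV[R]_N) (m : R) : Prop :=
  asym_cone (epi f) (x, (m : R^o)).

Definition star_shaped_set (R : realType) (T : lmodType R) (C : set T) : Prop :=
  forall l : R, 0 <= l <= 1 -> forall x, C x -> C (l *: x).

Definition star_shaped_fun (R : realType) (N : nat) (f : 'rV[R]_N -> R) : Prop :=
  forall (l : R) (x : 'rV[R]_N), 0 <= l <= 1 -> f (l *: x) <= l * f x.

Definition convex_cone (R : realType) (T : lmodType R) (K : set T) : Prop :=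
  [/\ K 0,
      (forall x y, K x -> K y -> K (x + y)) &
      (forall (l : R) x, 0 <= l -> K x -> K (l *: x))].

Definition cone_le (R : realType) (T : lmodType R) (K : set T) (X Y : T) : Prop :=
  K (Y - X).

Definition acceptable_deal (R : realType) (N : nat) (T : topologicalLmodType R)
  (P : set 'rV[R]_N) (V0 : 'rV[R]_N -> R) (V1 : 'rV[R]_N -> T) (A : set T)
  (x : 'rV[R]_N) : Prop :=
  [/\ P x, V0 x <= 0, A (V1 x) & V1 x <> 0].

Definition scalable_acceptable_deal (R : realType) (N : nat)
  (T : topologicalLmodType R)
  (P : set 'rV[R]_N) (V0 : 'rV[R]_N -> R) (V1 : 'rV[R]_N -> T) (A : set T)
  (x : 'rV[R]_N) : Prop :=
  [/\ asym_cone P x, asym_fun_le V0 x 0, asym_cone A (V1 x) & V1 x <> 0].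

(** The asymptotic cone [C^oo] of any set is a cone, and for a closed star-shaped
    [C] it is contained in [C]: if [l_a X_a -> X] with [X_a \in C] and [l_a -> 0],
    then eventually [l_a <= 1], so [l_a X_a \in C] and [X] lies in the closure of [C].
    Hence [l X \in C] for every [l >= 0] and [X \in C^oo].  Applied to [P], to [A],
    and to the epigraph of [V0] (closed by lower semicontinuity, star shaped because
    [V0] is) this gives the scaled statements; [l = 1] gives an acceptable deal. *)

From mathcomp Require Import all_boot all_algebra.
From mathcomp Require Import all_classical all_reals all_analysis.
Set Implicit Arguments.
Unset Strict Implicit.
Unset Printing Implicit Defensive.

Import GRing.Theory Num.Theory order.Order.TTheory.
Local Open Scope classical_set_scope.
Local Open Scope ring_scope.

Lemma net_cvg_comp (T U : topologicalType) (I : Type) (le : I -> I -> Prop)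
    (f : T -> U) (u : I -> T) (x : T) :
  {for x, continuous f} -> net_cvg le u x -> net_cvg le (f \o u) (f x).
Proof. by move=> fx ux V /fx /ux. Qed.

Lemma lmod_scaler_continuous (R : realType) (T : topologicalLmodType R) (k : R) :
  continuous (fun x : T => k *: x).
Proof.
move=> x; apply: (@continuous_comp T (R^o * T)%type T (fun x => (k, x))
  (fun z => z.1 *: z.2)); last exact: scale_continuous.
by apply: (@cvg_pair _ _ _ _ (nbhs (k : R^o))); [exact: cvg_cst | exact: cvg_id].
Qed.

Section AsymptoticCone.
Variables (R : realType) (T : topologicalLmodType R).
Implicit Types (C : set T) (X : T).

Lemma asym_coneZ C X (l : R) : 0 <= l -> asym_cone C X -> asym_cone C (l *: X).
Proof.
move=> l0 [I [le [dirI [Xa [la [CX la0 cla cX]]]]]].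
exists I, le; split => //; exists Xa, (fun i => l * la i); split => //.
- by move=> i; rewrite mulr_ge0.
- have := net_cvg_comp (@lmod_scaler_continuous R R^o l 0) cla.
  by rewrite scaler0.
- under eq_fun do rewrite -scalerA.
  exact: net_cvg_comp (@lmod_scaler_continuous _ _ l X) cX.
Qed.

Lemma asym_cone_sub C : closed C -> star_shaped_set C -> asym_cone C `<=` C.
Proof.
move=> cC sC X [I [le [[_ _ _ dirI] [Xa [la [CX la0 cla cX]]]]]].
apply: cC => B /cX [i1 Bi1].
have [i2 la_le1] := cla _ (nbhs0_ltW (@ltr01 R)).
have [k [i1k i2k]] := dirI i1 i2.
exists (la k *: Xa k); split; last exact: Bi1.
by apply: sC => //; rewrite la0 la_le1.
Qed.

Lemma asym_cone_closed_star_scale C X (l : R) :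
  closed C -> star_shaped_set C -> asym_cone C X -> 0 <= l -> C (l *: X).
Proof. by move=> cC sC CX l0; apply: asym_cone_sub cC sC _ (asym_coneZ l0 CX). Qed.

End AsymptoticCone.

Section Epigraph.
Variables (R : realType) (N : nat) (f : 'rV[R]_N -> R).

Lemma closed_epi :
  lower_semicontinuous (fun x : ('rV[R]_N : normedModType R) => (f x)%:E) ->
  closed (epi f : set (('rV[R]_N : topologicalLmodType R) * R^o)%type).
Proof.
move=> lsc [y m] cl; rewrite /epi /= leNgt; apply/negP => mfy.
have [ma afy] := midf_lt mfy; set a := (m + f y) / 2 in ma afy.
have [W Wy Wgt] := lsc y a afy.
have [[z r] [/= fzr [/= Wz ra]]] : epi f `&` (W `*` [set r : R^o | r < a]) !=set0.
  by apply: cl; exists (W, [set r : R^o | r < a]) => //; split => //; exact: lt_nbhsl.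
have := Wgt z Wz; rewrite lte_fin ltNge => /negP; apply.
exact: le_trans fzr (ltW ra).
Qed.

Lemma star_shaped_epi : star_shaped_fun f -> star_shaped_set (epi f).
Proof.
move=> sf t t01 [y m]; rewrite /epi /= => fym.
by apply: le_trans (sf t y t01) _; rewrite ler_wpM2l //; case/andP: t01.
Qed.

End Epigraph.

Theorem mainTheorem6 (R : realType) (X : topologicalLmodType R)
  (Xplus : set X) (N : nat) (P : set 'rV[R]_N) (V0 : 'rV[R]_N -> R)
  (V1 : 'rV[R]_N -> X) (A : set X) :
  convex_cone Xplus ->
  P 0 ->
  V0 0 = 0 ->
  (forall x, - V0 (- x) <= V0 x) ->
  V1 0 = 0 ->
  (forall x, cone_le Xplus (V1 x) (- V1 (- x))) ->
  A 0 ->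
  (forall a k, A a -> Xplus k -> A (a + k)) ->
  (* hypotheses of the theorem *)
  closed A -> star_shaped_set A ->
  closed (P : set ('rV[R]_N : normedModType R)) -> star_shaped_set P ->
  lower_semicontinuous (fun x : ('rV[R]_N : normedModType R) => (V0 x)%:E) -> star_shaped_fun V0 ->
  forall x, scalable_acceptable_deal P V0 V1 A x ->
    (forall l : R, 0 < l ->
       [/\ P (l *: x), V0 (l *: x) <= 0 & A (l *: V1 x)])
    /\ acceptable_deal P V0 V1 A x.
Proof.
move=> _ _ _ _ _ _ _ _ cA sA cP sP lsc sV0 x [Px V0x AV1x V1x_neq0].
have scaled (l : R) : 0 <= l -> [/\ P (l *: x), V0 (l *: x) <= 0 & A (l *: V1 x)].
  move=> l0; split.
  - exact: asym_cone_closed_star_scale cP sP Px l0.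
  - have := asym_cone_closed_star_scale (closed_epi lsc) (star_shaped_epi sV0) V0x l0.
    by rewrite /epi /= scaler0.
  - exact: asym_cone_closed_star_scale cA sA AV1x l0.
split=> [l /ltW | ]; first exact: scaled.
have [Px1 V0x1 AV1x1] := scaled 1 ler01.
by rewrite !scale1r in Px1 V0x1 AV1x1; split.
Qed.
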